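(* Let $X$ be a Banach space with three closed linear subspaces $M,N,L$ such that $M\supsetneq L$. Then for each pair of positive numbers $(a,b)$ with $(a+1)(b+1)<2$, either there exists $u\in M$ with $\|u\|=1$ and $\operatorname{dist}(u,N)>a$, or there exists $v\in N$ with $\|v\|=1$ and $\operatorname{dist}(v,L)>b$. *)

From HB Require Import structures.
From mathcomp Require Import all_boot all_order all_algebra.
From mathcomp Require Import all_classical all_reals all_analysis.
Set Implicit Arguments. Unset Strict Implicit. Unset Printing Implicit Defensive.
Import Order.TTheory GRing.Theory Num.Theory.
Import numFieldNormedType.Exports.
Local Open Scope classical_set_scope.
Local Open Scope ring_scope.

Definition is_linear_subspace (R : realType) (V : normedModType R) (S : set V) : Prop :=
  S 0 /\ (forall x y, S x -> S y -> S (x + y)) /\ (forall (k : R) x, S x -> S (k *: x)).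

Definition is_closed_subspace (R : realType) (V : normedModType R) (S : set V) : Prop :=
  is_linear_subspace S /\ closed S.

Definition dist_to (R : realType) (V : normedModType R) (x : V) (S : set V) : R :=
  inf [set `|x - y| | y in S].

From HB Require Import structures.
From mathcomp Require Import all_boot all_order all_algebra.
From mathcomp Require Import all_classical all_reals all_analysis.
From mathcomp Require Import lra.
Import Order.TTheory GRing.Theory Num.Theory.
Import numFieldNormedType.Exports.
Local Open Scope classical_set_scope.
Local Open Scope ring_scope.

(* If every unit vector of M is within a of N and every unit vector of N is
   within b of L, then every unit vector of M is within a + b + a b of L
   (go through a near point n of N, whose norm is at most 1 + a, and scale).
   As (a + 1)(b + 1) < 2 makes a + b + a b < 1, this contradicts the Riesz
   lemma for the proper closed subspace L of M. *)

Section DistToSubspace.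
Context {R : realType} {X : normedModType R}.
Implicit Types (S A B : set X) (x y : X).

Definition gap_le A B (c : R) :=
  forall v, A v -> `|v| = 1 -> dist_to v B <= c.

Lemma dist_to_le {S} x {y} : S y -> dist_to x S <= `|x - y|.
Proof.
move=> Sy; apply: ge_inf; last by exists y.
by exists 0 => _ [z _ <-].
Qed.

Lemma lb_le_dist_to S x e :
  S !=set0 -> (forall y, S y -> e <= `|x - y|) -> e <= dist_to x S.
Proof.
move=> [y Sy] lbe; apply: lb_le_inf; first by exists `|x - y|, y.
by move=> _ [z Sz <-]; exact: lbe.
Qed.

Lemma dist_to_lt S x t :
  S !=set0 -> dist_to x S < t -> exists2 y, S y & `|x - y| < t.
Proof.
move=> [y Sy] /inf_lt [|_ [z Sz <-] ltzt]; first by exists `|x - y|, y.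
by exists z.
Qed.

Lemma dist_to_le_add {S} x y : S !=set0 -> dist_to x S <= `|x - y| + dist_to y S.
Proof.
move=> S0; rewrite -lerBlDl; apply: lb_le_dist_to => // z Sz.
rewrite lerBlDl; exact: le_trans (dist_to_le x Sz) (ler_distD _ _ _).
Qed.

Lemma dist_to_gt0 S x : closed S -> S !=set0 -> ~ S x -> 0 < dist_to x S.
Proof.
move=> /closed_openC oSC S0 Sx.
have /nbhs_ballP [e /= e0 ballSC] : nbhs x (~` S) by exact: open_nbhs_nbhs.
apply: lt_le_trans e0 _; apply: lb_le_dist_to => // y Sy.
rewrite leNgt; apply/negP => ltye; apply: (ballSC y) => //.
by rewrite -ball_normE.
Qed.

Lemma dist_toZ_le {S} (k : R) x :
  S 0 -> (forall y, S y -> S (k *: y)) -> dist_to (k *: x) S <= `|k| * dist_to x S.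
Proof.
move=> S0 SZ; have [->|k0] := eqVneq k 0.
  rewrite scale0r normr0 mul0r.
  by apply: le_trans (dist_to_le 0 S0) _; rewrite subrr normr0.
have kp : 0 < `|k| by rewrite normr_gt0.
rewrite -ler_pdivrMl //; apply: lb_le_dist_to; first by exists 0.
move=> y Sy; rewrite ler_pdivrMl // -normrZ scalerBr.
exact: dist_to_le (SZ _ Sy).
Qed.

Lemma gap_le_dist_to {A B c v} :
  (forall k y, A y -> A (k *: y)) -> is_linear_subspace B ->
  gap_le A B c -> A v -> dist_to v B <= `|v| * c.
Proof.
move=> AZ [B0 [_ BZ]] gapAB Av; have [->|v0] := eqVneq v 0.
  rewrite normr0 mul0r.
  by apply: le_trans (dist_to_le 0 B0) _; rewrite subrr normr0.
have vp : 0 < `|v| by rewrite normr_gt0.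
have unit_v : `| `|v|^-1 *: v| = 1.
  by rewrite normrZ normfV normr_id mulVf ?gt_eqF.
have {1}-> : v = `|v| *: (`|v|^-1 *: v) by rewrite scalerA mulfV ?gt_eqF ?scale1r.
apply: le_trans (dist_toZ_le _ _ B0 (BZ _)) _.
rewrite normr_id; apply: ler_wpM2l; first exact: ltW.
exact: gapAB (AZ _ _ Av) unit_v.
Qed.

Lemma gap_le_trans {M N L a b} :
  is_linear_subspace N -> is_linear_subspace L -> 0 <= b ->
  gap_le M N a -> gap_le N L b -> gap_le M L (a + b + a * b).
Proof.
move=> [N0 [_ NZ]] subL b0 gapMN gapNL u Mu u1.
have L0 : L !=set0 by exists 0; case: subL.
have b1 : 0 < 1 + b by lra.
have dist_via_N : forall n, N n -> dist_to u L - b <= `|u - n| * (1 + b).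
  move=> n Nn; have := dist_to_le_add u n L0.
  have nle : `|n| <= 1 + `|u - n|.
    by have := ler_normB u (u - n); rewrite opprB addrC subrK u1.
  have := le_trans (gap_le_dist_to NZ subL gapNL Nn) (ler_wpM2r b0 nle).
  lra.
have : (dist_to u L - b) / (1 + b) <= dist_to u N.
  apply: lb_le_dist_to; first by exists 0.
  by move=> n Nn; rewrite ler_pdivrMr //; exact: dist_via_N.
rewrite ler_pdivrMr // => /le_trans /(_ (ler_wpM2r (ltW b1) (gapMN u Mu u1))).
lra.
Qed.

Lemma riesz_lemma {M L : set X} (t : R) :
  is_linear_subspace M -> is_closed_subspace L -> L `<=` M -> L <> M ->
  0 < t < 1 -> exists u, [/\ M u, `|u| = 1 & t < dist_to u L].
Proof.
move=> [_ [MD MZ]] [[L0 [LD LZ]] Lc] LM LneM /andP[t0 t1].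
have [x Mx Lx] : exists2 x, M x & ~ L x.
  apply: contrapT => noML; apply: LneM; apply/seteqP; split => // y My.
  by apply: contrapT => Ly; apply: noML; exists y.
have Ln0 : L !=set0 by exists 0.
set d := dist_to x L; have d0 : 0 < d by exact: dist_to_gt0.
have [l Ll lt_xl] : exists2 l, L l & `|x - l| < d / t.
  by apply: dist_to_lt => //; rewrite ltr_pdivlMr // gtr_pMr.
set r := `|x - l|; have r0 : 0 < r by apply: lt_le_trans (dist_to_le x Ll).
exists (r^-1 *: (x - l)); split.
- by apply: (MZ); apply: (MD) => //; rewrite -scaleN1r; apply: (MZ); exact: LM.
- by rewrite normrZ normfV normr_id mulVf ?gt_eqF.
- apply: (@lt_le_trans _ _ (d / r)); first by rewrite ltr_pdivlMr // mulrC -ltr_pdivlMr.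
  apply: lb_le_dist_to => // y Ly.
  rewrite ler_pdivrMr // -[r in _ * r](ger0_norm (ltW r0)) mulrC -normrZ.
  rewrite scalerBr scalerA mulfV ?gt_eqF // scale1r -addrA -opprD.
  by rewrite /d; apply: dist_to_le; apply: (LD) => //; apply: (LZ).
Qed.

End DistToSubspace.

Theorem lemma2p7 (R : realType) (X : completeNormedModType R)
  (M N L : set X)
  (hM : is_closed_subspace M) (hN : is_closed_subspace N)
  (hL : is_closed_subspace L)
  (hLM : L `<=` M) (hLneM : L <> M)
  (a b : R) (ha : 0 < a) (hb : 0 < b) (hab : (a + 1) * (b + 1) < 2) :
  (exists u : X, M u /\ `|u| = 1 /\ a < dist_to u N) \/
  (exists v : X, N v /\ `|v| = 1 /\ b < dist_to v L).
Proof.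
have [[u [Mu [u1 ltau]]]|noMN] := pselect (exists u : X, M u /\ `|u| = 1 /\ a < dist_to u N).
  by left; exists u.
right; apply: contrapT => noNL.
have gap_not_gt (A B : set X) c : ~ (exists v, A v /\ `|v| = 1 /\ c < dist_to v B) ->
    gap_le A B c.
  by move=> noAB v Av v1; rewrite leNgt; apply/negP => ltc; apply: noAB; exists v.
have gapML := gap_le_trans hN.1 hL.1 (ltW hb) (gap_not_gt _ _ _ noMN) (gap_not_gt _ _ _ noNL).
have [|u [Mu u1]] := riesz_lemma (a + b + a * b) hM.1 hL hLM hLneM.
  by apply/andP; split; nra.
by rewrite ltNge gapML.
Qed.
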